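(* Let $\varphi_1$ and $\varphi_2$ be two $\mathbb{T}$-gains on a connected graph $G$ with $n$ vertices and $m$ edges. Let $T$ be a normal spanning tree of $G$ and let $\overrightarrow{C_j(T)}$, $j=1,\dots,m-n+1$, be the directed fundamental cycles in the suitably oriented graph $\overrightarrow{G_T}$. Then $\varphi_1(\overrightarrow{C_j(T)})=\varphi_2(\overrightarrow{C_j(T)})$ for all $j=1,\dots,m-n+1$ if and only if $\varphi_1(\overrightarrow{C})=\varphi_2(\overrightarrow{C})$ for every cycle $C$ of $G$ (with $\overrightarrow{C}$ a directed version of $C$).
   Context: Graphs are finite, simple and undirected. $\mathbb{T}=\{z\in\mathbb{C}:|z|=1\}$. Each edge $e_{st}$ of $G$ gives two oriented edges $\overrightarrow{e_{st}}$ and $\overrightarrow{e_{ts}}$. A $\mathbb{T}$-gain on $G$ is a map $\varphi$ from the set of oriented edges to $\mathbb{T}$ with $\varphi(\overrightarrow{e_{ts}})=\varphi(\overrightarrow{e_{st}})^{-1}$; $\Phi=(G,\varphi)$ is then a $\mathbb{T}$-gain graph. The gain of a directed cycle $v_1\to v_2\to\cdots\to v_k\to v_1$ is $\varphi(\overrightarrow{e_{12}})\varphi(\overrightarrow{e_{23}})\cdots\varphi(\overrightarrow{e_{k1}})$; the two directions of a cycle have conjugate gains. A rooted spanning tree $T$ with root $v_r$ induces the tree order: $v_x\le v_y$ iff $v_x$ lies on the path in $T$ from $v_r$ to $v_y$. $T$ is a normal spanning tree if any two adjacent vertices of $G$ are comparable in the tree order. The suitably oriented graph $\overrightarrow{G_T}$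 orients each edge $e_{st}$ with $v_s\le v_t$ as $\overrightarrow{e_{st}}$ if $e_{st}\in E(T)$ and as $\overrightarrow{e_{ts}}$ if $e_{st}\notin E(T)$. Each of the $m-n+1$ edges not in $T$ creates a unique cycle with $T$ (a fundamental cycle $C_j(T)$); in $\overrightarrow{G_T}$ each fundamental cycle is a directed cycle, denoted $\overrightarrow{C_j(T)}$ (the directed fundamental cycles). *)

From mathcomp Require Import all_boot all_order all_algebra.
Set Implicit Arguments. Unset Strict Implicit. Unset Printing Implicit Defensive.
Import Order.TTheory GRing.Theory Num.Theory.
Local Open Scope ring_scope.

Definition simple_graph (V : finType) (adj : rel V) :=
  symmetric adj /\ irreflexive adj.

Definition graph_connected (V : finType) (adj : rel V) :=
  forall x y : V, connect adj x y.

(* A cycle of a graph (given as the cyclic sequence of its distinct vertices,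
   which also fixes one of its two directions): at least 3 distinct vertices,
   consecutive ones (cyclically) adjacent. *)
Definition is_cycle (V : finType) (adj : rel V) (c : seq V) :=
  ucycle adj c /\ (3 <= size c)%N.

Definition spanning_tree (V : finType) (adj T : rel V) :=
  [/\ subrel T adj, symmetric T, graph_connected T &
      forall c : seq V, ~ is_cycle T c].

Definition tree_le (V : finType) (T : rel V) (r x y : V) :=
  exists p : seq V, [/\ path T r p, uniq (r :: p), last r p = y & x \in r :: p].

Definition normal_spanning_tree (V : finType) (adj T : rel V) (r : V) :=
  spanning_tree adj T /\
  forall x y, adj x y -> tree_le T r x y \/ tree_le T r y x.

(* A T-gain: phi u v is the gain of the oriented edge u -> v. *)
Definition Tgain (C : numClosedFieldType) (V : finType) (adj : rel V)
  (phi : V -> V -> C) :=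
  forall u v, adj u v -> `|phi u v| = 1 /\ phi v u = (phi u v)^-1.

Definition cycle_gain (C : numClosedFieldType) (V : finType)
  (phi : V -> V -> C) (c : seq V) : C :=
  \prod_(e <- zip c (rot 1 c)) phi e.1 e.2.

From mathcomp Require Import all_boot all_order all_algebra.
From mathcomp Require Import zify.
Set Implicit Arguments. Unset Strict Implicit. Unset Printing Implicit Defensive.
Import Order.TTheory GRing.Theory Num.Theory.
Local Open Scope ring_scope.

(* Dividing phi1 by phi2 edgewise gives a gain psi whose cycle gains are the
   quotients of those of phi1 and phi2, so it suffices to show that psi is
   trivial on all cycles once it is trivial on the fundamental ones.  Every
   closed walk along the tree T has gain 1, by shortcutting repeated vertices
   until only a back-and-forth walk u -> v -> u remains.  Normality of T
   makes each edge {u, v} of G the non-tree edge of a fundamental cycle (or a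
   tree edge), so psi u v equals the gain of some tree walk from u to v.
   Replacing every edge of a cycle in this way produces a closed tree walk of
   the same gain, hence gain 1. *)

Definition walk_gain (R : pzRingType) (V : Type) (psi : V -> V -> R)
    (x : V) (p : seq V) : R :=
  \prod_(e <- zip (belast x p) p) psi e.1 e.2.

Section WalkGain.
Variables (R : pzRingType) (V : Type) (psi : V -> V -> R).

Lemma walk_gain0 x : walk_gain psi x [::] = 1.
Proof. by rewrite /walk_gain big_nil. Qed.

Lemma walk_gain_cons x y p :
  walk_gain psi x (y :: p) = psi x y * walk_gain psi y p.
Proof. by rewrite /walk_gain /= big_cons. Qed.

Lemma walk_gain_cat x p1 p2 :
  walk_gain psi x (p1 ++ p2) = walk_gain psi x p1 * walk_gain psi (last x p1) p2.
Proof.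
elim: p1 x => [|y p1 IH] x /=; first by rewrite walk_gain0 mul1r.
by rewrite !walk_gain_cons IH mulrA.
Qed.

Lemma walk_gain1 x y : walk_gain psi x [:: y] = psi x y.
Proof. by rewrite walk_gain_cons walk_gain0 mulr1. Qed.

End WalkGain.

Lemma cycle_gain_walk (C : numClosedFieldType) (V : finType) (psi : V -> V -> C)
    x q :
  cycle_gain psi (x :: q) = walk_gain psi x (rcons q x).
Proof. by rewrite /cycle_gain /walk_gain rot1_cons belast_rcons. Qed.

Lemma not_uniq_split (T : eqType) (s : seq T) :
  ~~ uniq s -> exists s1 z s2 s3, s = s1 ++ z :: s2 ++ z :: s3.
Proof.
elim: s => [|y s IH] //=; rewrite negb_and negbK.
have [ys _ | _ /= /IH [s1 [z [s2 [s3 ->]]]]] := boolP (y \in s).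
  by case/splitPr: ys => s2 s3; exists [::], y, s2, s3.
by exists (y :: s1), z, s2, s3.
Qed.

Section ForestWalks.
Variables (R : pzRingType) (V : finType) (T : rel V) (psi : V -> V -> R).
Hypothesis T_irr : irreflexive T.
Hypothesis T_acyclic : forall c : seq V, ~ is_cycle T c.
Hypothesis psi_rev : forall u v, T u v -> psi u v * psi v u = 1.

Lemma forest_closed_walk_gain x p :
  path T x p -> last x p = x -> walk_gain psi x p = 1.
Proof.
have [n] := ubnP (size p); elim: n x p => // n IH x p /ltnSE size_p Tp px.
have [p_uniq | /not_uniq_split [s1 [z [s2 [s3 p_eq]]]]] := boolP (uniq p).
  clear size_p; case/lastP: p px Tp p_uniq => [_ _ _|q w]; first exact: walk_gain0.
  rewrite last_rcons => -> Tp q_uniq.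
  case: q Tp q_uniq => [|y [|z q]] Tp q_uniq.
  - by move: Tp; rewrite /= T_irr.
  - by case/and3P: Tp => Txy Tyx _; rewrite walk_gain_cons walk_gain1 psi_rev.
  - exfalso; apply: (@T_acyclic [:: x, y, z & q]); split=> //.
    by rewrite /ucycle /cycle Tp cons_uniq -rcons_uniq.
have {}p_eq : p = rcons s1 z ++ (rcons s2 z ++ s3) by rewrite p_eq -!cat_rcons.
move: size_p Tp px; rewrite p_eq !size_cat !size_rcons !cat_path !last_cat !last_rcons.
move=> size_p /and3P [Tp1 Tp2 Tp3] px.
have loop_gain : walk_gain psi z (rcons s2 z) = 1.
  by apply: IH; rewrite ?size_rcons ?last_rcons //; lia.
rewrite !walk_gain_cat !last_rcons loop_gain mul1r.
have := walk_gain_cat psi x (rcons s1 z) s3; rewrite last_rcons => <-.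
apply: IH; first by rewrite size_cat size_rcons; lia.
- by rewrite cat_path Tp1 last_rcons.
- by rewrite last_cat last_rcons.
Qed.

End ForestWalks.

Lemma tree_le_path (V : finType) (T : rel V) r x y :
  tree_le T r x y -> exists p, [/\ path T x p, uniq (x :: p) & last x p = y].
Proof.
case=> w [Tw w_uniq wy xw]; move: Tw w_uniq wy; case/splitPl: xw => p1 p2 p1x.
rewrite cat_path last_cat p1x => /andP [_ Tp2].
rewrite -cat_cons lastI p1x cat_rcons cat_uniq => /and3P [_ _ p2_uniq] p2y.
by exists p2.
Qed.

Section NormalTreeWalks.
Variables (R : pzRingType) (V : finType) (adj T : rel V) (r : V) (psi : V -> V -> R).
Hypothesis adj_sym : symmetric adj.
Hypothesis adj_irr : irreflexive adj.
Hypothesis T_sub : subrel T adj.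
Hypothesis T_sym : symmetric T.
Hypothesis T_conn : graph_connected T.
Hypothesis T_acyclic : forall c : seq V, ~ is_cycle T c.
Hypothesis T_normal : forall x y, adj x y -> tree_le T r x y \/ tree_le T r y x.
Hypothesis psi_rev : forall u v, adj u v -> psi u v * psi v u = 1.
Hypothesis fundamental_gain : forall s t p,
  adj s t -> ~~ T s t -> tree_le T r s t ->
  path T s p -> uniq (s :: p) -> last s p = t -> walk_gain psi s (rcons p s) = 1.

Lemma tree_closed_walk_gain x p :
  path T x p -> last x p = x -> walk_gain psi x p = 1.
Proof.
apply: forest_closed_walk_gain => // [u|u v /T_sub]; last exact: psi_rev.
by apply/negP => /T_sub; rewrite adj_irr.
Qed.

Lemma fundamental_tree_path s t : adj s t -> ~~ T s t -> tree_le T r s t ->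
  exists p, [/\ path T s p, last s p = t & walk_gain psi s p * psi t s = 1].
Proof.
move=> st nTst /[dup] /tree_le_path [p [Tp p_uniq pt]] s_le_t; exists p; split=> //.
have := fundamental_gain st nTst s_le_t Tp p_uniq pt.
by rewrite -cats1 walk_gain_cat walk_gain1 pt.
Qed.

Lemma edge_gain_tree_walk u v : adj u v ->
  exists p, [/\ path T u p, last u p = v & walk_gain psi u p = psi u v].
Proof.
move=> uv; have [Tuv | nTuv] := boolP (T u v).
  by exists [:: v]; rewrite /= Tuv walk_gain1.
have vu : adj v u by rewrite adj_sym.
have [u_le_v | v_le_u] := T_normal uv.
  have [p [Tp pv p_gain]] := fundamental_tree_path uv nTuv u_le_v.
  exists p; split=> //.
  by rewrite -[LHS]mulr1 -(psi_rev vu) mulrA p_gain mul1r.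
(* Any tree walk q from u to v, followed by the tree path from v to u of the
   fundamental cycle of {v, u}, is a closed tree walk. *)
have nTvu : ~~ T v u by rewrite T_sym.
have [p [Tp pu p_gain]] := fundamental_tree_path vu nTvu v_le_u.
case/connectP: (T_conn u v) => q Tq qv.
exists q; split=> //.
have loop_gain : walk_gain psi u (q ++ p) = 1.
  by apply: tree_closed_walk_gain; rewrite ?cat_path ?last_cat -qv ?Tq.
by rewrite -[LHS]mulr1 -p_gain mulrA {1}qv -walk_gain_cat loop_gain mul1r.
Qed.

Lemma walk_gain_tree_walk x p : path adj x p ->
  exists q,
    [/\ path T x q, last x q = last x p & walk_gain psi x q = walk_gain psi x p].
Proof.
elim: p x => [|y p IH] x /=; first by exists [::].
case/andP=> /edge_gain_tree_walk [q1 [Tq1 q1y q1_gain]] /IH [q2 [Tq2 q2p q2_gain]].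
exists (q1 ++ q2); rewrite cat_path last_cat walk_gain_cat q1y.
by rewrite Tq1 Tq2 q2p q1_gain q2_gain walk_gain_cons.
Qed.

Lemma closed_walk_gain x p : path adj x p -> last x p = x -> walk_gain psi x p = 1.
Proof.
move=> /walk_gain_tree_walk [q [Tq <- <-]] qx.
exact: tree_closed_walk_gain.
Qed.

End NormalTreeWalks.

Lemma walk_gain_div (F : fieldType) (V : Type) (phi1 phi2 : V -> V -> F) x p :
  walk_gain (fun u v => phi1 u v / phi2 u v) x p =
  walk_gain phi1 x p / walk_gain phi2 x p.
Proof. by rewrite /walk_gain big_split prodfV. Qed.

Lemma walk_gain_neq0 (F : idomainType) (V : Type) (adj : rel V)
    (phi : V -> V -> F) x p :
  (forall u v, adj u v -> phi u v != 0) -> path adj x p -> walk_gain phi x p != 0.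
Proof.
move=> phi_neq0; elim: p x => [|y p IH] x /=; first by rewrite walk_gain0 oner_eq0.
by case/andP=> xy /IH p_neq0; rewrite walk_gain_cons mulf_neq0 ?phi_neq0.
Qed.

Section TGains.
Variables (C : numClosedFieldType) (V : finType) (adj : rel V) (phi : V -> V -> C).
Hypothesis phi_gain : Tgain adj phi.

Lemma Tgain_neq0 u v : adj u v -> phi u v != 0.
Proof. by case/phi_gain=> phi_norm _; rewrite -normr_eq0 phi_norm oner_eq0. Qed.

Lemma Tgain_mul_rev u v : adj u v -> phi u v * phi v u = 1.
Proof. by move=> uv; have [_ ->] := phi_gain uv; rewrite divff ?Tgain_neq0. Qed.

End TGains.

Lemma Tgain_ratio_mul_rev (C : numClosedFieldType) (V : finType) (adj : rel V)
    (phi1 phi2 : V -> V -> C) u v :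
  Tgain adj phi1 -> Tgain adj phi2 -> adj u v ->
  phi1 u v / phi2 u v * (phi1 v u / phi2 v u) = 1.
Proof.
by move=> phi1_gain phi2_gain uv; rewrite mulf_div !(Tgain_mul_rev _ uv) ?divr1.
Qed.

Lemma cycle_gain_eq_ratio (C : numClosedFieldType) (V : finType) (adj : rel V)
    (phi1 phi2 : V -> V -> C) c :
  Tgain adj phi2 -> is_cycle adj c ->
  cycle_gain phi1 c = cycle_gain phi2 c <->
  cycle_gain (fun u v => phi1 u v / phi2 u v) c = 1.
Proof.
move=> phi2_gain; case: c => [|x q] [/andP [c_path _] _] //.
rewrite !cycle_gain_walk walk_gain_div; split=> [->|]; last exact: divr1_eq.
exact/divff/(walk_gain_neq0 (Tgain_neq0 phi2_gain)).
Qed.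

Lemma fundamental_cycle_is_cycle (V : finType) (adj T : rel V) s t p :
  simple_graph adj -> subrel T adj ->
  adj s t -> ~~ T s t -> path T s p -> uniq (s :: p) -> last s p = t ->
  is_cycle adj (s :: p).
Proof.
move=> [adj_sym adj_irr] T_sub st nTst Tp p_uniq pt; split.
  by rewrite /ucycle p_uniq /cycle rcons_path (sub_path T_sub Tp) pt adj_sym st.
case: p Tp p_uniq pt => [|y [|z q]] //= Tp _ pt.
  by move: st; rewrite pt adj_irr.
by move: Tp nTst; rewrite pt => /andP [->].
Qed.

Theorem theorem3p1 (C : numClosedFieldType) (V : finType) (adj : rel V)
  (phi1 phi2 : V -> V -> C) (T : rel V) (r : V) :
  simple_graph adj -> graph_connected adj ->
  Tgain adj phi1 -> Tgain adj phi2 ->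
  normal_spanning_tree adj T r ->
  (forall (s t : V) (p : seq V),
     adj s t -> ~~ T s t -> tree_le T r s t ->
     path T s p -> uniq (s :: p) -> last s p = t ->
     cycle_gain phi1 (s :: p) = cycle_gain phi2 (s :: p))
  <->
  (forall c : seq V, is_cycle adj c -> cycle_gain phi1 c = cycle_gain phi2 c).
Proof.
move=> G_simple _ phi1_gain phi2_gain [[T_sub T_sym T_conn T_acyclic] T_normal].
have [adj_sym adj_irr] := G_simple.
have fundamental_cycle := fundamental_cycle_is_cycle G_simple T_sub.
split=> [fundamental_eq c c_cycle | cycle_eq s t p st nTst _ Tp p_uniq pt].
  apply/(cycle_gain_eq_ratio _ phi2_gain c_cycle).
  case: c c_cycle => [|x q] [/andP [c_path _] _] //; rewrite cycle_gain_walk.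
  apply: (closed_walk_gain adj_sym adj_irr T_sub T_sym T_conn T_acyclic T_normal)
    c_path _.
  - by move=> u v; apply: Tgain_ratio_mul_rev.
  - move=> s t p st nTst s_le_t Tp p_uniq pt; rewrite -cycle_gain_walk.
    have st_cycle := fundamental_cycle _ _ _ st nTst Tp p_uniq pt.
    by apply/(cycle_gain_eq_ratio _ phi2_gain st_cycle)/(fundamental_eq s t).
  - by rewrite last_rcons.
exact/cycle_eq/(fundamental_cycle _ _ _ st nTst Tp p_uniq pt).
Qed.
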